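(* Let $k_u(n)$ be the largest $k$ such that Maker has a strategy in the $k$-tournament-type game on $K_n$ guaranteeing that, at the end of the game, her digraph contains a copy of every tournament on $k$ vertices. Then $k_u(n)\le(1+o(1))\log_2 n$ as $n\to\infty$.
   Context: The game: Maker (moving first) and Breaker alternately claim one unclaimed edge of $K_n$, and each chooses an orientation for the claimed edge; the game ends when all edges are claimed. A tournament is a digraph with exactly one directed edge between each pair of distinct vertices. *)

From mathcomp Require Import all_boot.
Set Implicit Arguments. Unset Strict Implicit. Unset Printing Implicit Defensive.

(* A move: an ordered pair (u,v) of vertices of K_n = claiming the edge {u,v}
   and orienting it u -> v. *)
Definition arc (n : nat) := ('I_n * 'I_n)%type.

Definition claimed n (h : seq (arc n)) (u v : 'I_n) : bool :=
  ((u, v) \in h) || ((v, u) \in h).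

Definition legal n (h : seq (arc n)) (m : arc n) : bool :=
  (m.1 != m.2) && ~~ claimed h m.1 m.2.

(* Maker moves first, so her arcs are those at even positions of the history *)
Definition maker_arcs n (h : seq (arc n)) : seq (arc n) :=
  mask [seq ~~ odd i | i <- iota 0 (size h)] h.

Definition maker_digraph n (h : seq (arc n)) : rel 'I_n :=
  fun u v => (u, v) \in maker_arcs h.

Definition is_tournament k (T : rel 'I_k) : Prop :=
  (forall i, ~~ T i i) /\ (forall i j, i != j -> T i j = ~~ T j i).

Definition contains_copy n (D : rel 'I_n) k (T : rel 'I_k) : Prop :=
  exists f : 'I_k -> 'I_n, injective f /\ (forall i j, T i j -> D (f i) (f j)).

Definition universal_win n k (h : seq (arc n)) : Prop :=
  forall T : rel 'I_k, is_tournament T -> contains_copy (maker_digraph h) T.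

Fixpoint maker_forces n k (f : nat) (h : seq (arc n)) : Prop :=
  match f with
  | 0 => universal_win k h
  | f'.+1 =>
      if ~~ odd (size h)
      then exists m, legal h m /\ maker_forces k f' (rcons h m)
      else forall m, legal h m -> maker_forces k f' (rcons h m)
  end.

Definition maker_wins (n k : nat) : Prop := @maker_forces n k 'C(n, 2) [::].

From Pilot Require Import Defs.
From mathcomp Require Import all_boot zify.
(* Re-import so that [arc] denotes moves, not [path.arc]. *)
Import Defs.
Set Implicit Arguments. Unset Strict Implicit. Unset Printing Implicit Defensive.

(* Give an edge of K_n the value 2 if Maker owns it, 0 if Breaker owns
   it and 1 if it is free; the weight of an injective map g : [k] -> [n] is the
   product of the values of the C(k,2) edges it spans, and the potential of a
   position is the sum of the weights of all such maps (initially <= n^k).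
   A Maker move on edge e raises the potential by the total weight through e,
   a Breaker move lowers it by that amount.  Breaker always takes the edge of
   maximal weight, so each Maker move is paid for by the preceding Breaker move
   and the potential never exceeds twice its initial value.  If Maker wins, the
   2^C(k,2) tournaments on [k] give 2^C(k,2) distinct maps whose edges are all
   Maker's, each of weight 2^C(k,2); hence 2^(k(k-1)) <= 2 n^k, i.e.
   2^k <= 4n, which yields the asymptotic bound of the theorem. *)

(* The unordered pairs of [k], encoded as ordered pairs (i, j) with i < j. *)
Definition pairs k : {set 'I_k * 'I_k} := [set p : 'I_k * 'I_k | p.1 < p.2].

Lemma sum1_ord_lt k (j : 'I_k) : \sum_(i < k | i < j) 1 = j.
Proof.
by rewrite -(big_ord_widen_cond _ xpredT (fun=> 1) (ltnW (ltn_ord j))) sum1_card card_ord.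
Qed.

(* There are C(k,2) unordered pairs: column j contributes j of them. *)
Lemma card_pairs k : #|pairs k| = 'C(k, 2).
Proof.
rewrite -sum1_card -bin2_sum big_mkord.
rewrite (eq_bigl (fun p : 'I_k * 'I_k => p.1 < p.2)) => [|p]; last by rewrite inE.
rewrite -(pair_big_dep xpredT (fun i j : 'I_k => i < j) (fun _ _ => 1)) /=.
rewrite (exchange_big_dep xpredT) //=.
by apply: eq_bigr => j _; apply: sum1_ord_lt.
Qed.

Lemma bin2_double k : 'C(k, 2) * 2 = k * k.-1.
Proof. by elim: k => // k IH; rewrite binS bin1; case: k IH => //= k; lia. Qed.

Section GameBookkeeping.
Variable n : nat.
Implicit Types (h : seq (arc n)) (u v a b : 'I_n).

Lemma maker_arcs_rcons h m :
  maker_arcs (rcons h m) = if odd (size h) then maker_arcs h else rcons (maker_arcs h) m.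
Proof.
rewrite /maker_arcs size_rcons -addn1 iotaD map_cat -cats1.
rewrite mask_cat ?size_map ?size_iota //=.
by case: (odd (size h)); rewrite /= ?cats0 ?cats1.
Qed.

Lemma maker_arcs_sub h x : x \in maker_arcs h -> x \in h.
Proof. exact: mem_mask. Qed.

Lemma legal_rcons h m e : legal (rcons h m) e -> legal h e.
Proof.
rewrite /legal /claimed !mem_rcons !in_cons => /andP[-> /norP[/norP[_ n1] /norP[_ n2]]].
by rewrite (negbTE n1) (negbTE n2).
Qed.

Definition unorient (x : arc n) : arc n := if x.1 < x.2 then x else (x.2, x.1).

Lemma exists_legal h : size h < 'C(n, 2) -> exists m, legal h m.
Proof.
move=> short; case: (pickP (legal h)) => [m lm|none]; first by exists m.
have covered : pairs n \subset [set unorient x | x in h].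
  apply/subsetP => -[u v]; rewrite inE /= => uv; apply/imsetP.
  have := none (u, v); rewrite /legal /= neq_ltn uv /= => /negbFE /orP[] inh.
    by exists (u, v); rewrite // /unorient /= uv.
  by exists (v, u); rewrite // /unorient /= ltnNge (ltnW uv).
have := subset_leq_card covered; rewrite card_pairs => le_pairs.
have := leq_trans le_pairs (leq_trans (leq_imset_card _ _) (card_size h)).
by rewrite leqNgt short.
Qed.

Definition antisymmetric h := forall u v, (u, v) \in h -> (v, u) \in h -> False.

Lemma antisymmetric_rcons h m : antisymmetric h -> legal h m -> antisymmetric (rcons h m).
Proof.
case: m => a b anti; rewrite /legal /claimed /= => /andP[ab /norP[n1 n2]] u v.
rewrite !mem_rcons !in_cons !xpair_eqE.
case/orP => [/andP[/eqP e1 /eqP e2]|h1]; case/orP => [/andP[/eqP e3 /eqP e4]|h2].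
- by subst; rewrite eqxx in ab.
- by subst; rewrite h2 in n2.
- by subst; rewrite h1 in n2.
- exact: anti h1 h2.
Qed.

Definition same_edge a b u v : bool := ((u == a) && (v == b)) || ((u == b) && (v == a)).

Definition maker_edge h u v : bool :=
  ((u, v) \in maker_arcs h) || ((v, u) \in maker_arcs h).

Definition edge_value h u v : nat :=
  if maker_edge h u v then 2 else if claimed h u v then 0 else 1.

(* Factor by which the next move multiplies the value of its (free) edge. *)
Definition move_factor h : nat := if odd (size h) then 0 else 2.

Lemma edge_value_free h a b u v : legal h (a, b) -> same_edge a b u v -> edge_value h u v = 1.
Proof.
rewrite /legal /claimed /= => /andP[_ /norP[n1 n2]].
have nm : forall x, x \in h = false -> x \in maker_arcs h = false.
  by move=> x nx; apply/negP => /maker_arcs_sub; rewrite nx.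
by case/orP=> /andP[/eqP -> /eqP ->];
  rewrite /edge_value /maker_edge /claimed !nm ?(negbTE n1) ?(negbTE n2).
Qed.

Lemma edge_value_rcons h a b u v : legal h (a, b) ->
  edge_value (rcons h (a, b)) u v =
  if same_edge a b u v then move_factor h else edge_value h u v.
Proof.
move=> lab; case: ifP => [same|/norP[d1 d2]];
  rewrite /edge_value /move_factor /maker_edge /claimed maker_arcs_rcons.
  have := edge_value_free lab same; rewrite /edge_value /maker_edge /claimed.
  case/orP: same => /andP[/eqP -> /eqP ->]; case: (odd (size h));
    by rewrite !mem_rcons !in_cons !eqxx ?orbT //; case: ifP.
have other s : ((u, v) \in rcons s (a, b)) = ((u, v) \in s) /\
               ((v, u) \in rcons s (a, b)) = ((v, u) \in s).
  by rewrite !mem_rcons !in_cons !xpair_eqE (negbTE d1) [(v == a) && _]andbC (negbTE d2).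
by case: (odd (size h)); rewrite !(other h).1 !(other h).2 ?(other (maker_arcs h)).1
  ?(other (maker_arcs h)).2.
Qed.

End GameBookkeeping.

Section Potential.
Variables n k : nat.
Implicit Types (h : seq (arc n)) (a b : 'I_n).

Definition copy := {ffun 'I_k -> 'I_n}.

Definition weight h (g : copy) : nat := \prod_(p in pairs k) edge_value h (g p.1) (g p.2).

Definition spans (g : copy) a b : bool := [exists p in pairs k, same_edge a b (g p.1) (g p.2)].

Definition potential h : nat := \sum_(g : copy | injectiveb g) weight h g.

Definition edge_potential h a b : nat :=
  \sum_(g : copy | injectiveb g && spans g a b) weight h g.

Lemma spans_uniq (g : copy) a b p p' : injective g ->
  p \in pairs k -> p' \in pairs k ->
  same_edge a b (g p.1) (g p.2) -> same_edge a b (g p'.1) (g p'.2) -> p = p'.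
Proof.
move=> ig; case: p p' => [x y] [x' y']; rewrite !inE /same_edge /= => lt lt'.
case/orP=> /andP[/eqP e1 /eqP e2]; case/orP=> /andP[/eqP e3 /eqP e4];
  try by rewrite (ig x x'); [rewrite (ig y y') // e2 e4 | rewrite e1 e3].
all: have ex : x = y' by apply: ig; rewrite e1 e4.
all: have ey : y = x' by apply: ig; rewrite e2 e3.
all: by move: lt'; rewrite -ex -ey ltnNge (ltnW lt).
Qed.

Lemma weight_rcons h (g : copy) a b : injective g -> legal h (a, b) ->
  weight (rcons h (a, b)) g = if spans g a b then move_factor h * weight h g else weight h g.
Proof.
move=> ig lab; rewrite /weight /spans.
under eq_bigr => p _ do rewrite edge_value_rcons //.
case: existsP => [[p0 /andP[p0P same0]]|none].
  rewrite (bigD1 p0) //= [in RHS](bigD1 p0) //= same0 (edge_value_free lab same0) mul1n.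
  congr (_ * _); apply: eq_bigr => p /andP[pP ne]; case: ifP => // same.
  by rewrite (spans_uniq ig pP p0P same same0) eqxx in ne.
apply: eq_bigr => p pP; case: ifP => // same.
by case: none; exists p; rewrite pP.
Qed.

Lemma potential_rcons h a b : legal h (a, b) ->
  potential (rcons h (a, b)) + edge_potential h a b =
  potential h + move_factor h * edge_potential h a b.
Proof.
move=> lab; rewrite /potential /edge_potential big_distrr /= !big_mkcondr -!big_split /=.
apply: eq_bigr => g /injectiveP ig; rewrite weight_rcons //.
by case: (spans g a b); rewrite ?addn0 // addnC.
Qed.

Lemma edge_potential_breaker h a b x y : odd (size h) -> legal h (a, b) ->
  edge_potential (rcons h (a, b)) x y <= edge_potential h x y.
Proof.
move=> odd_h lab; apply: leq_sum => g /andP[/injectiveP ig _].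
by rewrite weight_rcons // /move_factor odd_h; case: ifP.
Qed.

Lemma edge_potential_le h a b : edge_potential h a b <= potential h.
Proof. by rewrite /edge_potential /potential big_mkcondr; apply: leq_sum => g _; case: ifP. Qed.

(* Initially all edges are free, so each of the at most n^k copies has weight 1. *)
Lemma potential_nil : potential [::] <= n ^ k.
Proof.
have -> : n ^ k = \sum_(g : copy) 1 by rewrite sum1_card card_ffun !card_ord.
rewrite /potential big_mkcond; apply: leq_sum => g _; case: ifP => // _.
by rewrite /weight big1.
Qed.

End Potential.

Definition tournament_of k (S : {set 'I_k * 'I_k}) : rel 'I_k :=
  fun i j => if i < j then (i, j) \in S else if j < i then (j, i) \notin S else false.

Lemma tournament_ofP k (S : {set 'I_k * 'I_k}) : is_tournament (tournament_of S).
Proof.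
split=> [i|i j]; first by rewrite /tournament_of ltnn.
by rewrite /tournament_of neq_ltn; case: (ltngtP i j) => // _ _; rewrite ?negbK.
Qed.

Section FinalPosition.
Variables n k : nat.
Variable h : seq (arc n).
Hypothesis win : universal_win k h.
Hypothesis anti : antisymmetric h.

Definition maker_copies : {set copy n k} :=
  [set g : copy n k | injectiveb g && [forall p in pairs k, maker_edge h (g p.1) (g p.2)]].

Definition forward_pairs (g : copy n k) : {set 'I_k * 'I_k} :=
  [set p in pairs k | (g p.1, g p.2) \in maker_arcs h].

(* Every set of pairs S is realized as forward_pairs of the Maker copy of the
   tournament orienting exactly S forwards, hence there are >= 2^C(k,2) such copies. *)
Lemma card_maker_copies : 2 ^ #|pairs k| <= #|maker_copies|.
Proof.
rewrite -card_powerset; apply: leq_trans (leq_imset_card forward_pairs maker_copies).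
apply: subset_leq_card; apply/subsetP => S; rewrite inE => /subsetP SP.
have [f [inj_f f_arcs]] := win (tournament_ofP S).
pose g : copy n k := [ffun i => f i].
have oriented p : p \in pairs k ->
    if p \in S then (g p.1, g p.2) \in maker_arcs h else (g p.2, g p.1) \in maker_arcs h.
  case: p => x y; rewrite inE /= => xy; rewrite !ffunE.
  case: ifP => xS; apply: f_arcs; rewrite /tournament_of; first by rewrite xy.
  by rewrite ltnNge (ltnW xy) xy xS.
apply/imsetP; exists g.
  rewrite inE; apply/andP; split.
    by apply/injectiveP => x y; rewrite !ffunE; apply: inj_f.
  apply/forallP => p; apply/implyP => pP; have := oriented p pP; rewrite /maker_edge.
  by case: ifP => _ ->; rewrite ?orbT.
apply/setP => p; rewrite inE.
case pP: (p \in pairs k) => /=; last by apply/negP => /SP; rewrite pP.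
have := oriented p pP; case: (p \in S) => [-> //|back].
by apply/esym/negP => fwd; apply: (anti (maker_arcs_sub fwd) (maker_arcs_sub back)).
Qed.

(* Each Maker copy alone contributes 2^C(k,2) to the final potential. *)
Lemma potential_final : 2 ^ #|pairs k| * 2 ^ #|pairs k| <= potential k h.
Proof.
apply: leq_trans (leq_mul card_maker_copies (leqnn _)) _.
rewrite -sum_nat_const /potential [X in _ <= X](bigID (mem maker_copies)) /=.
apply: leq_trans (leq_addr _ _).
rewrite [X in _ <= X](eq_bigl (fun g => g \in maker_copies)); last first.
  by move=> g; rewrite !inE andbA andbb.
apply: leq_sum => g; rewrite inE => /andP[_ /forallP all_maker].
rewrite /weight -prod_nat_const; apply: eq_leq; apply: eq_bigr => p pP.
by rewrite /edge_value (implyP (all_maker p) pP).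
Qed.

End FinalPosition.

Section BreakerStrategy.
Variables n k : nat.
Implicit Types (h : seq (arc n)) (B : nat).

(* Invariant of Breaker's strategy: the potential plus a bound s on the weight
   through any edge Maker may claim next stays below B. *)
Definition potential_bounded h B := exists s, potential k h + s <= B /\
  (~~ odd (size h) -> forall e, legal h e -> edge_potential k h e.1 e.2 <= s).

(* A Maker move spends the slack s, leaving the potential below B. *)
Lemma maker_move_bounded h B a b : ~~ odd (size h) -> legal h (a, b) ->
  potential_bounded h B -> potential_bounded (rcons h (a, b)) B.
Proof.
move=> even_h lab [s [le_B le_s]]; exists 0; split; last by rewrite size_rcons /= even_h.
have := potential_rcons k lab; rewrite /move_factor (negbTE even_h) => grow.
have /= := le_s even_h _ lab; lia.
Qed.

(* A Breaker move on an edge of maximal weight lowers the potential by that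
   weight, which then bounds the weight through every edge still free. *)
Lemma breaker_move_bounded h B a b : odd (size h) -> legal h (a, b) ->
  (forall e, legal h e -> edge_potential k h e.1 e.2 <= edge_potential k h a b) ->
  potential_bounded h B -> potential_bounded (rcons h (a, b)) B.
Proof.
move=> odd_h lab max_ab [s [le_B _]]; exists (edge_potential k h a b); split.
  have := potential_rcons k lab; rewrite /move_factor odd_h; lia.
move=> _ [x y] lxy; apply: leq_trans (edge_potential_breaker _ _ _ odd_h lab) _.
exact: (max_ab (x, y) (legal_rcons lxy)).
Qed.

(* Whatever Maker does, Breaker keeps the potential below B to the end of the
   game, where a Maker win would force it above 2^(2 C(k,2)). *)
Lemma breaker_strategy f h B : size h + f = 'C(n, 2) -> antisymmetric h ->
  potential_bounded h B -> maker_forces k f h -> 2 ^ #|pairs k| * 2 ^ #|pairs k| <= B.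
Proof.
elim: f h => [|f IH] h size_h anti bounded /=.
  move=> win; have [s [le_B _]] := bounded.
  exact: leq_trans (potential_final win anti) (leq_trans (leq_addr s _) le_B).
have step m : legal h m -> maker_forces k f (rcons h m) -> potential_bounded (rcons h m) B ->
    2 ^ #|pairs k| * 2 ^ #|pairs k| <= B.
  move=> lm forces bounded'; apply: IH bounded' forces; first by rewrite size_rcons; lia.
  exact: antisymmetric_rcons.
case: ifP => [even_h [[a b] [lab forces]] | /negbFE odd_h forces].
  exact: step lab forces (maker_move_bounded even_h lab bounded).
have [m0 l0] : exists m, legal h m by apply: exists_legal; lia.
have [[a b] lab max_ab] := arg_maxnP (fun e => edge_potential k h e.1 e.2) l0.
exact: step lab (forces _ lab) (breaker_move_bounded odd_h lab max_ab bounded).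
Qed.

End BreakerStrategy.

Lemma maker_wins_bound n k : maker_wins n k -> 2 ^ ('C(k, 2) * 2) <= 2 * n ^ k.
Proof.
move=> win; rewrite muln2 -addnn expnD -card_pairs.
apply: leq_trans (_ : 2 * potential k (Nil (arc n)) <= _); last exact: leq_mul (leqnn 2) (potential_nil n k).
apply: (breaker_strategy (f := 'C(n, 2)) (h := [::])) win => //.
exists (potential k (Nil (arc n))); split; first by rewrite mul2n -addnn.
by move=> _ e _; apply: edge_potential_le.
Qed.

(* Taking k-th roots: 2^(k(k-1)) <= 2 n^k gives 2^(k-1) <= 2n, i.e. 2^k <= 4n. *)
Lemma exp2_le_4n n k : 0 < n -> 2 ^ ('C(k, 2) * 2) <= 2 * n ^ k -> 2 ^ k <= 4 * n.
Proof.
move=> n_gt0; case: k => [_|k]; first by rewrite muln_gt0 n_gt0.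
rewrite bin2_double /= mulnC expnM => le_2n.
have root : (2 ^ k) ^ k.+1 <= (2 * n) ^ k.+1.
  by apply: leq_trans le_2n _; rewrite expnMn leq_mul2r (ltn_exp2l 0) ?orbT.
by rewrite leq_exp2r // in root; rewrite expnS; lia.
Qed.

Theorem mainTheorem10 :
  forall p q : nat, 0 < p -> 0 < q ->
  exists N : nat, forall n : nat, N <= n ->
  forall k : nat, maker_wins n k -> 2 ^ (k * q) <= n ^ (q + p).
Proof.
move=> p q p_gt0 q_gt0; exists (4 ^ q) => n le_4q_n k /maker_wins_bound win.
have n_gt0 : 0 < n by apply: leq_trans le_4q_n; rewrite expn_gt0.
have le_4q_np : 4 ^ q <= n ^ p.
  by apply: leq_trans le_4q_n _; rewrite -{1}(expn1 n) leq_pexp2l.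
rewrite expnM expnD mulnC; apply: leq_trans (_ : (4 * n) ^ q <= _).
  by rewrite leq_exp2r // exp2_le_4n.
by rewrite expnMn leq_mul2r le_4q_np orbT.
Qed.
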